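(* For every integer $n\geq1$, $\mathrm{C}_{\sharp\leq2}\nleq_W\mathrm{C}_{\sharp=n}$.
   Context: Represented spaces carry partial surjections $\delta:\subseteq\mathbb{N}^\mathbb{N}\to X$; a realizer $F$ of $f$ satisfies $\delta_YF(p)\in f(\delta_X(p))$ for $p\in\operatorname{dom}(f\delta_X)$. $f\leq_W g$ iff there are computable partial $K,H$ on Baire space such that $p\mapsto K\langle p,G(H(p))\rangle$ realizes $f$ for every realizer $G$ of $g$. Closed subsets of Cantor space are named by binary trees (set of infinite paths); $\mathrm{C}_{\sharp\leq m}$ is the restriction of $\mathrm{C}_{\{0,1\}^\mathbb{N}}$ (output any point of the closed set) to trees having exactly $m$ vertices at each level $k$ with $2^k\geq m$, and $\mathrm{C}_{\sharp=m}$ its further restriction to trees in which, from some finite depth on, every vertex has exactly one child. *)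

From mathcomp Require Import all_boot.
From Stdlib Require Import ProofIrrelevance FunctionalExtensionality.
Set Implicit Arguments. Unset Strict Implicit. Unset Printing Implicit Defensive.

Definition baire := nat -> nat.

Definition bpair (p q : baire) : baire :=
  fun n => if odd n then q n./2 else p n./2.

(** * Oracle (relative) partial mu-recursive functions. *)
Inductive code : Type :=
| CZero
| CSucc
| CProj of nat
| COracle
| CComp of code & list code
| CPrimRec of code & code
| CMu of code.

Inductive eval (o : baire) : code -> seq nat -> nat -> Prop :=
| ev_zero v : eval o CZero v 0
| ev_succ v : eval o CSucc v (head 0 v).+1
| ev_proj i v : eval o (CProj i) v (nth 0 v i)
| ev_oracle v : eval o COracle v (o (head 0 v))
| ev_comp f gs v ws y :
    evals o gs v ws -> eval o f ws y -> eval o (CComp f gs) v y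
| ev_rec0 f g v y : eval o f v y -> eval o (CPrimRec f g) (0 :: v) y
| ev_recS f g n v y z :
    eval o (CPrimRec f g) (n :: v) y -> eval o g (n :: y :: v) z ->
    eval o (CPrimRec f g) (n.+1 :: v) z
| ev_mu f v n :
    eval o f (n :: v) 0 ->
    (forall m, m < n -> exists k, 0 < k /\ eval o f (m :: v) k) ->
    eval o (CMu f) v n
with evals (o : baire) : list code -> seq nat -> seq nat -> Prop :=
| evs_nil v : evals o nil v [::]
| evs_cons g gs v w ws :
    eval o g v w -> evals o gs v ws -> evals o (g :: gs) v (w :: ws).

(** A partial function [F] on Baire space (undefined = [None]) is computable
    if some oracle machine [e], given oracle [p \in dom F], outputs
    [F p n] on input [n]. *)
Definition computes (e : code) (F : baire -> option baire) : Prop :=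
  forall p q, F p = Some q -> forall n, eval p e [:: n] (q n).

Definition computable (F : baire -> option baire) : Prop :=
  exists e, computes e F.

Record rep_space := RepSpace {
  carrier :> Type;
  delta : baire -> carrier -> Prop;
  delta_fun : forall p x y, delta p x -> delta p y -> x = y;
  delta_surj : forall x, exists p, delta p x
}.

(** Multi-valued functions (problems) f : X ⇉ Y as relations;
    dom f = { x | exists y, f x y }. *)
Definition problem (X Y : rep_space) := X -> Y -> Prop.

Definition realizes (X Y : rep_space) (F : baire -> option baire)
    (f : problem X Y) : Prop :=
  forall p x, delta p x -> (exists y, f x y) ->
    exists q, F p = Some q /\ exists y, delta q y /\ f x y.

(** Weihrauch reducibility:  p ↦ K<p, G(H(p))> realizes f for every
    realizer G of g. *)
Definition weihrauch_le (X Y U V : rep_space)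
    (f : problem X Y) (g : problem U V) : Prop :=
  exists K H : baire -> option baire,
    computable K /\ computable H /\
    forall G : baire -> option baire, realizes G g ->
      realizes (fun p => obind (fun q => obind (fun r => K (bpair p r)) (G q))
                                 (H p)) f.

Lemma cantor_fun (p : baire) (x y : nat -> bool) :
  (forall n, p n = nat_of_bool (x n)) -> (forall n, p n = nat_of_bool (y n)) ->
  x = y.
Proof.
move=> hx hy; apply: functional_extensionality => n.
by move: (hx n) (hy n) => -> /eqP; case: (x n); case: (y n).
Qed.

Lemma cantor_surj (x : nat -> bool) :
  exists p : baire, forall n, p n = nat_of_bool (x n).
Proof. by exists (fun n => nat_of_bool (x n)). Qed.

Definition cantor : rep_space :=
  @RepSpace (nat -> bool) (fun p x => forall n, p n = nat_of_bool (x n))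
    cantor_fun cantor_surj.

Record tree := Tree {
  tmem : seq bool -> bool;
  tree_closed : forall s b, tmem (rcons s b) -> tmem s
}.

Definition tree_delta (p : baire) (T : tree) : Prop :=
  (forall n, p n <= 1) /\ (forall s, p (pickle s) = nat_of_bool (tmem T s)).

Lemma tree_fun p T T' : tree_delta p T -> tree_delta p T' -> T = T'.
Proof.
case: T => t ht; case: T' => t' ht' [_ h] [_ h'] /=.
have E : t = t'.
  apply: functional_extensionality => s.
  by move: (h s) (h' s) => /= -> /eqP; case: (t s); case: (t' s).
subst t'; by rewrite (proof_irrelevance _ ht ht').
Qed.

Lemma tree_surj T : exists p, tree_delta p T.
Proof.
exists (fun n => if unpickle n is Some s then nat_of_bool (tmem T s) else 0).
split => [n|s]; last by rewrite pickleK.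
by case: (unpickle n) => // s; case: (tmem T s).
Qed.

Definition trees : rep_space := @RepSpace tree tree_delta tree_fun tree_surj.

Definition level_size (T : tree) (k : nat) : nat :=
  #|[pred t : k.-tuple bool | tmem T (val t)]|.

Definition is_path (T : tree) (x : nat -> bool) : Prop :=
  forall k, tmem T (mkseq x k).

Definition card_le_tree (m : nat) (T : tree) : Prop :=
  forall k, m <= 2 ^ k -> level_size T k = m.

Definition eventually_unary (T : tree) : Prop :=
  exists d, forall s, d <= size s -> tmem T s ->
    (nat_of_bool (tmem T (rcons s false)) + nat_of_bool (tmem T (rcons s true)) = 1)%N.

Definition C_sharp_le (m : nat) : problem trees cantor :=
  fun T x => card_le_tree m T /\ is_path T x.

Definition C_sharp_eq (m : nat) : problem trees cantor :=
  fun T x => card_le_tree m T /\ eventually_unary T /\ is_path T x.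

From mathcomp Require Import all_boot.
From Stdlib Require Import ClassicalEpsilon Classical FunctionalExtensionality.
Set Implicit Arguments. Unset Strict Implicit. Unset Printing Implicit Defensive.

(* H and K are continuous, and that is all this argument uses of them.  The
   C_{#<=2}-instances are trees with two vertices on every level [k.+1], steered
   by a decision sequence [e : nat -> option bool]: at a level where [e] says
   [Some b], one branch dies and the other splits.  Build [e] by finite
   extensions, treating every finite string [s] in turn.  If, at the current
   stage, H maps our tree to a tree containing [s] and unary above it, hand K the
   unique path through [s]; K answers with a path through our tree, and we kill
   its branch at a later level.  By continuity K gives the same, now dead,
   prefix on every extension of the stage.  Otherwise, again by continuity, no
   extension makes H produce a tree containing [s] that is unary above [s].  In
   the limit, H produces an eventually unary tree; any path through it is
   determined by its prefix [s] of the unarity depth, and the stage of [s]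
   leaves K no correct answer. *)

Definition agree {A : Type} (f g : nat -> A) (n : nat) := forall i, i < n -> f i = g i.

Lemma agree_mono A (f g : nat -> A) n m : m <= n -> agree f g n -> agree f g m.
Proof. by move=> le h i hi; apply: h; apply: leq_trans le. Qed.

Lemma agree_trans A (f g k : nat -> A) n : agree f g n -> agree g k n -> agree f k n.
Proof. by move=> h1 h2 i hi; rewrite h1 // h2. Qed.

Lemma ex_uniform_bound (P : nat -> nat -> Prop) n :
  (forall m N N', N <= N' -> P m N -> P m N') ->
  (forall m, m < n -> exists N, P m N) -> exists N, forall m, m < n -> P m N.
Proof.
move=> mono; elim: n => [|n IH] h; first by exists 0.
have [N1 h1] : exists N, forall m, m < n -> P m N.
  by apply: IH => m hm; apply: h; apply: ltnW.
have [N2 h2] := h n (ltnSn n).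
exists (maxn N1 N2) => m; rewrite ltnS leq_eqVlt => /orP [/eqP->|hm].
  by apply: mono h2; rewrite leq_maxr.
by apply: mono (h1 m hm); rewrite leq_maxl.
Qed.

Lemma chain_limit A (X : nat -> (nat -> A) * nat) :
  (forall j, (X j).2 < (X j.+1).2 /\ agree (X j.+1).1 (X j).1 (X j).2) ->
  exists f, forall j, agree f (X j).1 (X j).2.
Proof.
move=> hX.
have mono j d : (X j).2 <= (X (j + d)).2 /\ agree (X (j + d)).1 (X j).1 (X j).2.
  elim: d => [|d [IH1 IH2]]; first by rewrite addn0.
  have [lt ag] := hX (j + d); rewrite addnS; split; first exact: leq_trans (ltnW lt).
  by apply: agree_trans IH2; apply: agree_mono ag.
have ge j : j <= (X j).2.
  by elim: j => // j IH; apply: leq_ltn_trans IH (proj1 (hX j)).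
exists (fun k => (X k.+1).1 k) => j k hk /=.
have [hkj|hjk] := leqP k.+1 j.
- have [_ ag] := mono k.+1 (j - k.+1); rewrite subnKC // in ag.
  by rewrite ag //; apply: ge.
- have [_ ag] := mono j (k.+1 - j); rewrite subnKC ?(ltnW hjk) // in ag.
  by rewrite ag.
Qed.

Lemma fusion A (Inv : (nat -> A) -> nat -> Prop) (Q : nat -> (nat -> A) -> Prop) e0 m0 :
  Inv e0 m0 ->
  (forall j e m, Inv e m -> exists e' m', [/\ m < m', agree e' e m, Inv e' m' &
     forall f, agree f e' m' -> Q j f]) ->
  exists f, forall j, Q j f.
Proof.
move=> h0 hstep.
have hnext j (x : (nat -> A) * nat) : exists x' : (nat -> A) * nat, Inv x.1 x.2 ->
    [/\ x.2 < x'.2, agree x'.1 x.1 x.2, Inv x'.1 x'.2 &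
        forall f, agree f x'.1 x'.2 -> Q j f].
  have [hx|hx] := classic (Inv x.1 x.2); last by exists x.
  by have [e' [m' ?]] := hstep j _ _ hx; exists (e', m').
pose next j x := proj1_sig (constructive_indefinite_description _ (hnext j x)).
pose fix X j := if j is j'.+1 then next j' (X j') else (e0, m0).
have XP j : Inv (X j).1 (X j).2.
  elim: j => // j IH.
  by have [] := proj2_sig (constructive_indefinite_description _ (hnext j (X j))) IH.
have Xstep j := proj2_sig (constructive_indefinite_description _ (hnext j (X j))) (XP j).
have [f hf] : exists f, forall j, agree f (X j).1 (X j).2.
  by apply: chain_limit => j; have [] := Xstep j.
by exists f => j; have [_ _ _ hQ] := Xstep j; apply: hQ; exact: (hf j.+1).
Qed.

Lemma eval_continuous o c v y : eval o c v y ->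
  exists N, forall o', agree o' o N -> eval o' c v y
with evals_continuous o cs v ws : evals o cs v ws ->
  exists N, forall o', agree o' o N -> evals o' cs v ws.
Proof.
- case=> {c v y}.
  + by move=> v; exists 0 => o' _; constructor.
  + by move=> v; exists 0 => o' _; constructor.
  + by move=> i v; exists 0 => o' _; constructor.
  + move=> v; exists (head 0 v).+1 => o' h; rewrite -(h (head 0 v)) //; constructor.
  + move=> f gs v ws y hs hf.
    have [N1 h1] := evals_continuous _ _ _ _ hs.
    have [N2 h2] := eval_continuous _ _ _ _ hf.
    exists (maxn N1 N2) => o' h; econstructor.
      by apply: h1; apply: agree_mono h; rewrite leq_maxl.
    by apply: h2; apply: agree_mono h; rewrite leq_maxr.
  + move=> f g v y hf.
    have [N1 h1] := eval_continuous _ _ _ _ hf.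
    by exists N1 => o' h; constructor; apply: h1.
  + move=> f g n v y z h1 h2.
    have [N1 k1] := eval_continuous _ _ _ _ h1.
    have [N2 k2] := eval_continuous _ _ _ _ h2.
    exists (maxn N1 N2) => o' h; econstructor.
      by apply: k1; apply: agree_mono h; rewrite leq_maxl.
    by apply: k2; apply: agree_mono h; rewrite leq_maxr.
  + move=> f v n h0 hlt.
    (* The recursive calls must be made on the subproofs of [hlt] themselves. *)
    have hlt' : forall m, m < n -> exists k, 0 < k /\
        exists N, forall o', agree o' o N -> eval o' f (m :: v) k :=
      fun m hm => match hlt m hm with
        ex_intro k (conj hk he) => ex_intro _ k (conj hk (eval_continuous _ _ _ _ he)) end.
    have [N1 k1] := eval_continuous _ _ _ _ h0.
    have [N2 k2] : exists N, forall m, m < n -> exists k, 0 < k /\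
        forall o', agree o' o N -> eval o' f (m :: v) k.
      apply: ex_uniform_bound.
        move=> m N N' le [k [hk hh]]; exists k; split => // o' ho.
        by apply: hh; apply: agree_mono ho.
      by move=> m hm; have [k [hk [N hN]]] := hlt' m hm; exists N, k.
    exists (maxn N1 N2) => o' h; constructor.
      by apply: k1; apply: agree_mono h; rewrite leq_maxl.
    move=> m hm; have [k [hk hh]] := k2 m hm; exists k; split => //.
    by apply: hh; apply: agree_mono h; rewrite leq_maxr.
- case=> {cs v ws}.
  + by move=> v; exists 0 => o' _; constructor.
  + move=> g gs v w ws h1 h2.
    have [N1 k1] := eval_continuous _ _ _ _ h1.
    have [N2 k2] := evals_continuous _ _ _ _ h2.
    exists (maxn N1 N2) => o' h; constructor.
      by apply: k1; apply: agree_mono h; rewrite leq_maxl.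
    by apply: k2; apply: agree_mono h; rewrite leq_maxr.
Qed.

Lemma eval_muE o f v n : eval o (CMu f) v n ->
  eval o f (n :: v) 0 /\ forall m, m < n -> exists k, 0 < k /\ eval o f (m :: v) k.
Proof. by move=> h; inversion h. Qed.

Lemma eval_functional o c v y : eval o c v y -> forall y', eval o c v y' -> y = y'
with evals_functional o cs v ws : evals o cs v ws -> forall ws', evals o cs v ws' -> ws = ws'.
Proof.
- case=> {c v y}.
  + by move=> v y' h; inversion h.
  + by move=> v y' h; inversion h.
  + by move=> i v y' h; inversion h.
  + by move=> v y' h; inversion h.
  + move=> f gs v ws y hs hf y' h; inversion h; subst.
    match goal with H : evals _ _ _ ?w |- _ =>
      have E := evals_functional _ _ _ _ hs _ H; subst end.
    match goal with H : eval _ _ _ y' |- _ => exact: (eval_functional _ _ _ _ hf _ H) end.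
  + move=> f g v y hf y' h; inversion h; subst.
    match goal with H : eval _ f _ y' |- _ => exact: (eval_functional _ _ _ _ hf _ H) end.
  + move=> f g n v y z h1 h2 y' h; inversion h; subst.
    match goal with H : eval _ (CPrimRec _ _) _ _ |- _ =>
      have E := eval_functional _ _ _ _ h1 _ H; subst end.
    match goal with H : eval _ g _ y' |- _ => exact: (eval_functional _ _ _ _ h2 _ H) end.
  + move=> f v n h0 hlt.
    have hlt' : forall m, m < n -> exists k, 0 < k /\
        forall y', eval o f (m :: v) y' -> k = y' :=
      fun m hm => match hlt m hm with
        ex_intro k (conj hk he) => ex_intro _ k (conj hk (eval_functional _ _ _ _ he)) end.
    move=> n' /eval_muE [H1 H2].
    case: (ltngtP n n') => // hnn.
      have [k [hk he]] := H2 n hnn.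
      by have := eval_functional _ _ _ _ h0 _ he => E; rewrite -E in hk.
    have [k [hk he]] := hlt' n' hnn.
    by have := he _ H1 => E; rewrite E in hk.
- case=> {cs v ws}.
  + by move=> v ws' h; inversion h.
  + move=> g gs v w ws h1 h2 ws' h; inversion h; subst.
    match goal with H : eval _ _ _ _, H' : evals _ _ _ _ |- _ =>
    by rewrite (eval_functional _ _ _ _ h1 _ H) (evals_functional _ _ _ _ h2 _ H') end.
Qed.

Definition pcontinuous (F : baire -> option baire) : Prop :=
  forall p q, F p = Some q -> forall N, exists M,
    forall p' q', F p' = Some q' -> agree p' p M -> agree q' q N.

Lemma computable_pcontinuous F : computable F -> pcontinuous F.
Proof.
move=> [e hc] p q hF N.
have [M hM] : exists M, forall i, i < N -> forall p' q', F p' = Some q' ->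
    agree p' p M -> q' i = q i.
  apply: ex_uniform_bound => [i M M' le h p' q' hF' ha|i _].
    by apply: h hF' _; apply: agree_mono ha.
  have [M hM] := eval_continuous (hc _ _ hF i).
  exists M => p' q' hF' ha.
  exact: eval_functional (hc _ _ hF' i) _ (hM _ ha).
by exists M => p' q' hF' ha i hi; apply: hM hF' ha.
Qed.

Lemma bpair_agree p p' r r' N : agree p' p N -> agree r' r N ->
  agree (bpair p' r') (bpair p r) N.
Proof.
move=> hp hr k hk; rewrite /bpair.
have hk2 : k./2 < N.
  by rewrite ltn_half_double; apply: leq_trans hk _; rewrite -addnn leq_addr.
by case: ifP => _; [rewrite hr | rewrite hp].
Qed.

Definition bname (y : nat -> bool) : baire := fun i => nat_of_bool (y i).

Lemma cantor_deltaE w (z : cantor) : delta w z -> w = bname z.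
Proof. by move=> h; apply: functional_extensionality => i; rewrite h. Qed.

Lemma take_mkseq (f : nat -> bool) k m : k <= m -> take k (mkseq f m) = mkseq f k.
Proof. by move=> h; rewrite /mkseq -map_take take_iota (minn_idPl h). Qed.

Lemma tmem_take T t k : tmem T t -> tmem T (take k t).
Proof.
elim/last_ind: t k => [|t x IH] k h; first by [].
rewrite -cats1 take_cat; case: ifP => hk.
  by apply: IH; apply: tree_closed h.
case: (k - size t) => [|j] /=; first by rewrite cats0; apply: tree_closed h.
by rewrite cats1.
Qed.

Lemma tree_delta_tmem q T q' T' t : tree_delta q T -> tree_delta q' T' ->
  q' (pickle t) = q (pickle t) -> tmem T' t = tmem T t.
Proof. by move=> [_ h] [_ h']; rewrite h h'; case: (tmem T t); case: (tmem T' t). Qed.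

Definition unary_from (d : nat) (T : tree) := forall s, d <= size s -> tmem T s ->
  (nat_of_bool (tmem T (rcons s false)) + nat_of_bool (tmem T (rcons s true)) = 1)%N.

Lemma unique_child T t b :
  (nat_of_bool (tmem T (rcons t false)) + nat_of_bool (tmem T (rcons t true)) = 1)%N ->
  tmem T (rcons t b) -> b = tmem T (rcons t true).
Proof. by case: b => // h1 h2; move: h1; rewrite h2; case: (tmem T (rcons t true)). Qed.

Definition extendible T s := forall m, exists u, size u = m /\ tmem T (s ++ u).

Lemma extendible_child T s : extendible T s -> exists b, extendible T (rcons s b).
Proof.
move=> g; apply: NNPP => hn.
have dead b : exists m, forall u, size u = m -> ~ tmem T (rcons s b ++ u).
  apply: NNPP => hh; apply: hn; exists b => m; apply: NNPP => hh2.
  by apply: hh; exists m => u hu ht; apply: hh2; exists u.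
have [[m0 hm0] [m1 hm1]] := (dead false, dead true).
have [u [hu ht]] := g (maxn m0 m1).+1.
case: u hu ht => [|b u] //= [hu]; rewrite -cat_rcons => ht.
have := tmem_take (size (rcons s b) + (if b then m1 else m0)) ht.
rewrite take_cat ltnNge leq_addr /= addKn.
case: b ht => ht.
  by apply: hm1; rewrite size_takel // hu leq_maxr.
by apply: hm0; rewrite size_takel // hu leq_maxl.
Qed.

Lemma extendible_path T s : extendible T s -> exists y, is_path T y /\ mkseq y (size s) = s.
Proof.
move=> g.
pose cb x := if excluded_middle_informative (extendible T (rcons x true)) then true else false.
pose fix c k := if k is k'.+1 then rcons (c k') (cb (c k')) else s.
have cext k : extendible T (c k).
  elim: k => [|k IH] //=; rewrite /cb; case: excluded_middle_informative => // hn.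
  by have [[] hb] := extendible_child IH.
have csize k : size (c k) = size s + k.
  by elim: k => [|k IH] /=; rewrite ?addn0 // size_rcons IH addnS.
have cpre k l : exists u, c (k + l) = c k ++ u.
  elim: l => [|l [u hu]]; first by exists [::]; rewrite addn0 cats0.
  by exists (rcons u (cb (c (k + l)))); rewrite addnS /= hu rcons_cat.
pose y i := nth false (c i.+1) i.
have my k : mkseq y k = take k (c k).
  apply: (@eq_from_nth _ false); first by rewrite size_mkseq size_takel // csize leq_addl.
  move=> i; rewrite size_mkseq => hi; rewrite nth_mkseq // nth_take //.
  have [u hu] := cpre i.+1 (k - i.+1); rewrite subnKC // in hu.
  by rewrite hu nth_cat csize (leq_trans (ltnSn i)) // leq_addl.
exists y; split.
  move=> k; rewrite my; apply: tmem_take.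
  by have [u [/size0nil -> ht]] := cext k 0; rewrite cats0 in ht.
have [u hu] := cpre 0 (size s); rewrite add0n in hu.
by rewrite my hu take_size_cat.
Qed.

Lemma unary_extendible T s : tmem T s -> unary_from (size s) T -> extendible T s.
Proof.
move=> hs hu; elim=> [|m [u [hsz ht]]]; first by exists [::]; rewrite cats0.
have h1 := hu (s ++ u); rewrite size_cat leq_addr in h1; have {}h1 := h1 isT ht.
exists (rcons u (tmem T (rcons (s ++ u) true))); rewrite size_rcons hsz -rcons_cat; split => //.
by case E: (tmem T (rcons (s ++ u) true)) => //; move: h1; rewrite E; case: tmem.
Qed.

Lemma unary_path_prefix T T' s y y' N :
  unary_from (size s) T -> unary_from (size s) T' -> is_path T y -> is_path T' y' ->
  mkseq y (size s) = s -> mkseq y' (size s) = s ->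
  (forall i, i < N -> tmem T' (rcons (mkseq y i) true) = tmem T (rcons (mkseq y i) true)) ->
  mkseq y' N = mkseq y N.
Proof.
move=> hu hu' py py' my my' hN.
suff IH k : k <= N -> mkseq y' k = mkseq y k by apply: IH.
elim: k => [|k IH] hk //; rewrite !mkseqS IH ?(ltnW hk) //; congr rcons.
have [hks|hks] := ltnP k (size s).
  by rewrite -(nth_mkseq false y' hks) -(nth_mkseq false y hks) my my'.
have ht' := py' k.+1; rewrite mkseqS IH ?(ltnW hk) // in ht'.
have ht := py k.+1; rewrite mkseqS in ht.
rewrite (unique_child (hu' _ _ _) ht') ?size_mkseq ?hN //; last by rewrite -IH ?(ltnW hk).
by rewrite (unique_child (hu _ _ (py k)) ht) ?size_mkseq.
Qed.

Lemma not_unary_open q T s : tree_delta q T -> ~ (tmem T s /\ unary_from (size s) T) ->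
  exists N, forall q' T', tree_delta q' T' -> agree q' q N ->
    ~ (tmem T' s /\ unary_from (size s) T').
Proof.
move=> dq hnot.
have [hs|hs] := boolP (tmem T s); last first.
  exists (pickle s).+1 => q' T' dT' ha [hs' _]; move: hs.
  by rewrite -(tree_delta_tmem dq dT') ?ha // hs'.
have [t ht] : exists t, ~ (size s <= size t -> tmem T t ->
    (nat_of_bool (tmem T (rcons t false)) + nat_of_bool (tmem T (rcons t true)) = 1)%N).
  by apply: not_all_ex_not => hu; apply: hnot.
have [ht1 ht2 ht3] : [/\ size s <= size t, tmem T t &
    (nat_of_bool (tmem T (rcons t false)) + nat_of_bool (tmem T (rcons t true)) <> 1)%N].
  by split=> [||e]; [apply: NNPP => hh; apply: ht => h1 h2; exfalso; apply: hh ..|apply: ht].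
exists (maxn (pickle t) (maxn (pickle (rcons t false)) (pickle (rcons t true)))).+1.
move=> q' T' dT' ha [_ hu']; apply: ht3.
rewrite -!(tree_delta_tmem dq dT') ?ha // ?ltnS ?leq_max ?leqnn ?orbT //.
by apply: hu' => //; rewrite (tree_delta_tmem dq dT') ?ha // ltnS leq_max leqnn.
Qed.

Definition fork_step (o : option bool) (ab : seq bool * seq bool) :=
  match o with
  | None => (rcons ab.1 false, rcons ab.2 false)
  | Some true => (rcons ab.2 false, rcons ab.2 true)
  | Some false => (rcons ab.1 false, rcons ab.1 true)
  end.

Fixpoint forks (e : nat -> option bool) k :=
  if k is k'.+1 then fork_step (e k') (forks e k') else ([:: false], [:: true]).

Definition fork_mem e (s : seq bool) :=
  if s is [::] then true
  else (s == (forks e (size s).-1).1) || (s == (forks e (size s).-1).2).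

Lemma forks_size e k : size (forks e k).1 = k.+1 /\ size (forks e k).2 = k.+1.
Proof.
elim: k => [|k [h1 h2]] //=.
by case: (e k) => [[]|] /=; rewrite !size_rcons ?h1 ?h2.
Qed.

Lemma forks_neq e k : (forks e k).1 != (forks e k).2.
Proof.
elim: k => [|k IH] //=.
by case: (e k) => [[]|] /=; apply/eqP => /rcons_inj [] // E; rewrite E eqxx in IH.
Qed.

Lemma forks_agree e e' k : agree e e' k -> forks e k = forks e' k.
Proof. by elim: k => [|k IH] h //=; rewrite IH ?h //; apply: agree_mono h. Qed.

Lemma fork_memS e t k : size t = k.+1 ->
  fork_mem e t = (t == (forks e k).1) || (t == (forks e k).2).
Proof. by case: t => // x t [E]; rewrite /fork_mem /= E. Qed.

Lemma fork_mem_closed e s b : fork_mem e (rcons s b) -> fork_mem e s.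
Proof.
case: s => [|x s] //; rewrite /fork_mem size_rcons /=.
case: (e (size s)) => [[]|] /=; rewrite -!rcons_cons => /orP [] /eqP /rcons_inj [] -> _;
  by rewrite eqxx ?orbT.
Qed.

Lemma fork_mem_agree e e' s : agree e e' (size s) -> fork_mem e s = fork_mem e' s.
Proof.
case: s => [|x s] // h; rewrite /fork_mem /= (@forks_agree e e') //.
exact: agree_mono h.
Qed.

Definition fork_tree e : tree := @Tree (fork_mem e) (@fork_mem_closed e).

Definition fork_name e : baire :=
  fun n => if @unpickle (seq bool) n is Some s then nat_of_bool (fork_mem e s) else 0.

Lemma fork_name_delta e : tree_delta (fork_name e) (fork_tree e).
Proof.
split => [n|s]; last by rewrite /fork_name pickleK.
by rewrite /fork_name; case: unpickle => // s; case: fork_mem.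
Qed.

Lemma fork_name_agree N : exists M, forall e e', agree e e' M ->
  agree (fork_name e) (fork_name e') N.
Proof.
have [M hM] : exists M, forall i, i < N -> forall e e', agree e e' M ->
    fork_name e i = fork_name e' i.
  apply: ex_uniform_bound => [i M M' le h e e' ha|i _].
    by apply: h; apply: agree_mono ha.
  exists (size (odflt [::] (@unpickle (seq bool) i))) => e e'.
  by rewrite /fork_name; case: unpickle => [s|] //= /fork_mem_agree ->.
by exists M => e e' ha i hi; apply: hM.
Qed.

Lemma fork_tree_card e : card_le_tree 2 (fork_tree e).
Proof.
case=> [|k] // _; rewrite /level_size /=.
have [s1 s2] := forks_size e k.
set a := (forks e k).1 in s1 *; set b := (forks e k).2 in s2 *.
have ha : size a == k.+1 by rewrite s1.
have hb : size b == k.+1 by rewrite s2.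
have hab : Tuple ha != Tuple hb.
  by apply/eqP => /(congr1 val) /= /eqP; apply/negP; apply: forks_neq.
transitivity #|[set Tuple ha; Tuple hb]|; last by rewrite cards2 hab.
apply: eq_card => -[[|x s] /= hs]; rewrite !inE //.
by rewrite (@fork_memS _ (x :: s) k (eqP hs)) -/a -/b -!val_eqE.
Qed.

Lemma fork_tree_extendible e : extendible (fork_tree e) [::].
Proof.
case=> [|m]; first by exists [::].
have [hs _] := forks_size e m.
by exists (forks e m).1; split; rewrite //= (fork_memS _ hs) eqxx.
Qed.

Definition settled (e : nat -> option bool) m := forall k, m <= k -> e k = None.

Lemma forks_settled e m l : settled e m ->
  forks e (m + l) = ((forks e m).1 ++ nseq l false, (forks e m).2 ++ nseq l false).
Proof.
move=> hi; elim: l => [|l IH]; first by rewrite addn0 !cats0; case: (forks e m).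
have nr j : nseq j false ++ [:: false] = nseq j.+1 false by elim: j => //= j ->.
by rewrite addnS /= hi ?leq_addr // IH /= -!cats1 -!catA !nr.
Qed.

Lemma fork_tree_kill e e' m L A :
  settled e m -> m <= L -> agree e' e L -> e' L = Some (A == (forks e m).1) ->
  (A == (forks e m).1) || (A == (forks e m).2) ->
  forall z, is_path (fork_tree e') z -> mkseq z m.+1 != A.
Proof.
move=> hset hmL ha heL hA z pz.
have [s1 s2] := forks_size e m; have hne := forks_neq e m.
set F1 := (forks e m).1 in heL hA s1 hne *; set F2 := (forks e m).2 in hA s2 hne *.
have FL : forks e' L.+1 = fork_step (Some (A == F1))
    (F1 ++ nseq (L - m) false, F2 ++ nseq (L - m) false).
  by rewrite /= heL (forks_agree ha) -{1}(subnKC hmL) forks_settled.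
have : fork_mem e' (mkseq z L.+2) := pz L.+2.
rewrite (fork_memS _ (size_mkseq _ _)) FL.
rewrite -(take_mkseq z (_ : m.+1 <= L.+2)) ?ltnS ?leqW //; move: (mkseq z L.+2) => t.
case: (eqVneq A F1) hA => [->|hA1] hA.
  by case/orP => /eqP -> /=; rewrite -cats1 -catA take_size_cat // eq_sym.
rewrite (eqP hA).
by case/orP => /eqP -> /=; rewrite -cats1 -catA take_size_cat.
Qed.

Lemma realizes_patch (X Y : rep_space) (f : problem X Y) G q (x : X) r (y : Y) :
  realizes G f -> delta q x -> f x y -> delta r y ->
  exists G', realizes G' f /\ G' q = Some r.
Proof.
move=> hG dq hf dr.
exists (fun q' => if excluded_middle_informative (q' = q) then Some r else G q').
split; last by case: excluded_middle_informative.
move=> q' x' dq' hdom.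
destruct (excluded_middle_informative (q' = q)) as [E|ne]; last exact: hG.
by subst q'; rewrite (delta_fun dq' dq); exists r; split => //; exists y.
Qed.

Section Diagonalization.

Variables (n : nat) (H K : baire -> option baire).
Hypotheses (H_cont : pcontinuous H) (K_cont : pcontinuous K).
Hypothesis reduction : forall G, realizes G (C_sharp_eq n) ->
  realizes (fun p => obind (fun q => obind (fun r => K (bpair p r)) (G q)) (H p))
    (C_sharp_le 2).

Definition answer q r := exists T y, [/\ tree_delta q T, r = bname y & C_sharp_eq n T y].

Definition choice_realizer q : option baire :=
  if excluded_middle_informative (exists r, answer q r) is left h
  then Some (proj1_sig (constructive_indefinite_description _ h)) else None.

Lemma choice_realizer_answer q r : choice_realizer q = Some r -> answer q r.
Proof.
rewrite /choice_realizer; case: excluded_middle_informative => // h [<-].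
exact: proj2_sig (constructive_indefinite_description _ h).
Qed.

Lemma choice_realizer_realizes : realizes choice_realizer (C_sharp_eq n).
Proof.
move=> q T dq [y hy]; rewrite /choice_realizer; case: excluded_middle_informative => [h|h].
  have [T' [y' [dT' E hy']]] := proj2_sig (constructive_indefinite_description _ h).
  rewrite -(tree_fun dq dT') in hy'.
  by eexists; split; first reflexivity; exists y'; rewrite E.
by exfalso; apply: h; exists (bname y), T, y.
Qed.

Lemma reduction_at e G : realizes G (C_sharp_eq n) -> exists q r z,
  [/\ H (fork_name e) = Some q, G q = Some r,
      K (bpair (fork_name e) r) = Some (bname z) & is_path (fork_tree e) z].
Proof.
move=> hG.
have [y [py _]] := extendible_path (fork_tree_extendible e).
have [w [hw [z [dz [_ pz]]]]] :=
  reduction hG (fork_name_delta e) (ex_intro _ y (conj (fork_tree_card e) py)).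
move: hw; case Eq: (H (fork_name e)) => [q|] //=; case Er: (G q) => [r|] //= hK.
by exists q, r, z; rewrite -(cantor_deltaE dz).
Qed.

Lemma H_fork_continuous e q N : H (fork_name e) = Some q -> exists M, forall e' q',
  agree e' e M -> H (fork_name e') = Some q' -> agree q' q N.
Proof.
move=> hq; have [N1 h1] := H_cont hq N; have [M hM] := fork_name_agree N1.
by exists M => e' q' ha hq'; apply: h1 hq' (hM _ _ ha).
Qed.

Definition refutes (s : seq bool) e := forall q T y z,
  H (fork_name e) = Some q -> tree_delta q T -> unary_from (size s) T ->
  is_path T y -> mkseq y (size s) = s ->
  K (bpair (fork_name e) (bname y)) = Some (bname z) -> ~ is_path (fork_tree e) z.

Lemma output_prefix_stable e s q Tq y z N :
  H (fork_name e) = Some q -> tree_delta q Tq -> unary_from (size s) Tq ->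
  is_path Tq y -> mkseq y (size s) = s ->
  K (bpair (fork_name e) (bname y)) = Some (bname z) ->
  exists M, forall e' q' T' y' z', agree e' e M ->
    H (fork_name e') = Some q' -> tree_delta q' T' -> unary_from (size s) T' ->
    is_path T' y' -> mkseq y' (size s) = s ->
    K (bpair (fork_name e') (bname y')) = Some (bname z') -> mkseq z' N = mkseq z N.
Proof.
move=> hq dq hu py my hK.
have [NK hNK] := K_cont hK N.
have [Mp hMp] := fork_name_agree NK.
have [Nq hNq] : exists Nq, forall i, i < NK -> pickle (rcons (mkseq y i) true) < Nq.
  apply: ex_uniform_bound => [i M M' le h|i _]; first exact: leq_trans h le.
  by exists (pickle (rcons (mkseq y i) true)).+1.
have [MH hMH] := H_fork_continuous Nq hq.
exists (maxn Mp MH) => e' q' T' y' z' ha hq' dT' hu' py' my' hK'.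
have aq := hMH _ _ (agree_mono (leq_maxr _ _) ha) hq'.
have ey : mkseq y' NK = mkseq y NK.
  apply: (unary_path_prefix hu hu' py py' my my') => i hi.
  by apply: (tree_delta_tmem dq dT'); apply: aq; apply: hNq.
have az : agree (bname z') (bname z) N.
  apply: (hNK _ _ hK'); apply: bpair_agree.
    by apply: hMp; apply: agree_mono ha; rewrite leq_maxl.
  by move=> i hi; rewrite /bname -(nth_mkseq false y' hi) -(nth_mkseq false y hi) ey.
apply: (@eq_from_nth _ false); rewrite !size_mkseq // => i hi; rewrite !nth_mkseq //.
by have := az i hi; rewrite /bname; case: (z' i); case: (z i).
Qed.

Lemma kill_stage e1 m1 s q Tq : settled e1 m1 -> H (fork_name e1) = Some q ->
  tree_delta q Tq -> card_le_tree n Tq -> tmem Tq s -> unary_from (size s) Tq ->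
  exists e2 m2, [/\ m1 < m2, agree e2 e1 m1, settled e2 m2 &
    forall e', agree e' e2 m2 -> refutes s e'].
Proof.
move=> hset hq dq cardq hs hu.
have [y [py my]] := extendible_path (unary_extendible hs hu).
have hy : C_sharp_eq n Tq y by split => //; split => //; exists (size s).
have dy : @delta cantor (bname y) y by [].
have [G1 [hG1 G1q]] := realizes_patch choice_realizer_realizes dq hy dy.
have [q1 [r [z [hq1 hr hK pz]]]] := reduction_at e1 hG1.
move: hq1 hr hK; rewrite hq => -[<-]; rewrite G1q => -[<-] hK.
pose A := mkseq z m1.+1.
have hA : (A == (forks e1 m1).1) || (A == (forks e1 m1).2).
  by rewrite -(fork_memS _ (size_mkseq z m1.+1)); exact: (pz m1.+1).
have [M hM] := output_prefix_stable m1.+1 hq dq hu py my hK.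
pose L := maxn m1 M.
pose e2 k := if k == L then Some (A == (forks e1 m1).1) else e1 k.
have a21 : agree e2 e1 L.
  by move=> k hk; rewrite /e2; case: eqP => // E; rewrite E ltnn in hk.
exists e2, L.+1; split.
- by rewrite ltnS leq_maxl.
- by apply: agree_mono a21; rewrite leq_maxl.
- move=> k hk; rewrite /e2; case: eqP => [E|_]; first by rewrite E ltnn in hk.
  by apply: hset; apply: leq_trans (leq_maxl m1 M) (ltnW hk).
move=> e' ha q' T' y' z' hq' dT' hu' py' my' hK' pz'.
have a1 : agree e' e1 L by apply: agree_trans a21; apply: agree_mono ha.
have heL : e' L = Some (A == (forks e1 m1).1) by rewrite ha // /e2 eqxx.
have := fork_tree_kill hset (leq_maxl _ _) a1 heL hA pz'.
rewrite (hM e' q' T' y' z') ?eqxx //.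
by apply: agree_mono a1; rewrite leq_maxr.
Qed.

Lemma escape_stage e1 m1 s q Tq : settled e1 m1 -> H (fork_name e1) = Some q ->
  tree_delta q Tq -> ~ (tmem Tq s /\ unary_from (size s) Tq) ->
  exists e2 m2, [/\ m1 < m2, agree e2 e1 m1, settled e2 m2 &
    forall e', agree e' e2 m2 -> refutes s e'].
Proof.
move=> hset hq dq hnot.
have [N hN] := not_unary_open dq hnot.
have [M hM] := H_fork_continuous N hq.
exists e1, (maxn m1 M).+1; split => //.
- by rewrite ltnS leq_maxl.
- by move=> k hk; apply: hset; apply: leq_trans hk; rewrite leqW // leq_maxl.
move=> e' ha q' T' y' z' hq' dT' hu' py' my' _ _.
apply: (hN q' T' dT'); first by apply: hM hq'; apply: agree_mono ha; rewrite leqW // leq_maxr.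
by split => //; rewrite -my'; apply: py'.
Qed.

Lemma stage e1 m1 s : settled e1 m1 -> exists e2 m2,
  [/\ m1 < m2, agree e2 e1 m1, settled e2 m2 & forall e', agree e' e2 m2 -> refutes s e'].
Proof.
move=> hset.
have [q [r [_ [hq hr _ _]]]] := reduction_at e1 choice_realizer_realizes.
have [Tq [_ [dq _ [cardq _]]]] := choice_realizer_answer hr.
have [[hs hu]|hnot] := classic (tmem Tq s /\ unary_from (size s) Tq).
  exact: kill_stage hset hq dq cardq hs hu.
exact: escape_stage hset hq dq hnot.
Qed.

Lemma no_reduction : False.
Proof.
have [e he] : exists e, forall j, refutes (odflt [::] (@unpickle (seq bool) j)) e.
  by apply: (@fusion _ settled _ (fun _ => None) 0) => // j e1 m1; apply: stage.
have [q [r [z [hq hr hK pz]]]] := reduction_at e choice_realizer_realizes.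
have [T [y [dq Er [_ [[d hd] py]]]]] := choice_realizer_answer hr; subst r.
have := he (pickle (mkseq y d)); rewrite pickleK /refutes size_mkseq.
exact: (fun hs => hs q T y z hq dq hd py erefl hK pz).
Qed.

End Diagonalization.

Theorem corollary24 (n : nat) : 1 <= n ->
  ~ weihrauch_le (C_sharp_le 2) (C_sharp_eq n).
Proof.
move=> _ [K [H [cK [cH reduction]]]].
exact: (no_reduction (computable_pcontinuous cH) (computable_pcontinuous cK) reduction).
Qed.
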